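(* Let $N_{\rm q}\ge1$ and $N\ge 2$ be integers, let $\rho$ be an $N_{\rm q}$-qubit density matrix with eigenvalues $\lambda_1\ge\lambda_2\ge\dots\ge\lambda_{2^{N_{\rm q}}}\ge 0$, and let $\tilde{\boldsymbol\lambda}=[\lambda_2,\dots,\lambda_{2^{N_{\rm q}}}]^{\rm T}$. For a function $g$ write $\mathbb{E}\{g(\lambda)\}=\frac{1}{2^{N_{\rm q}}-1}\sum_{i=2}^{2^{N_{\rm q}}}g(\lambda_i)$, let $\mu=\mathbb{E}\{\lambda\}$ and assume $\mu>0$. Define the relative noise bandwidth $b(\tilde{\boldsymbol\lambda})=\mu^{-1}\sqrt{\mathbb{E}\{|\lambda-\mu|^2\}}$. For $\boldsymbol\beta\in\mathbb{R}^{N-1}$ let $\tilde\epsilon(\boldsymbol\beta)=\mathbb{E}\{|\lambda\prod_{n=1}^{N-1}(\lambda-\beta_n)|\}$ and define the error ratio $R(\boldsymbol\beta)=\tilde\epsilon(\boldsymbol\beta)/\tilde\epsilon(\mathbf 0)$. Let $\boldsymbol\beta=\mu\mathbf 1_{N-1}$ (the $N$-th order Type-1 permutation filter). Then $$R(\boldsymbol\beta)\le\frac{1}{\mu}\Big[b(\tilde{\boldsymbol\lambda})\sqrt{2^{N_{\rm q}}-1}\Big]^{N-1},$$ which describes the scaling of the error ratio as $b(\tilde{\boldsymbol\lambda})\to 0$.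
   Context: An $N$-th order permutation filter with zeros $0,\beta_1,\dots,\beta_{N-1}$ maps $\rho$ to $\rho\prod_{n=1}^{N-1}(\rho-\beta_nI)$; the choice $\boldsymbol\beta=\mathbf 0$ corresponds to $N$-th order virtual distillation ($\rho\mapsto\rho^N$). The expectation $\mathbb{E}$ is taken over the spectral distribution of the nondominant eigenvalues $\lambda_2,\dots,\lambda_{2^{N_{\rm q}}}$ of $\rho$, each with equal weight. *)

From HB Require Import structures.
From mathcomp Require Import all_boot all_order all_algebra.
From mathcomp Require Import complex.
Set Implicit Arguments. Unset Strict Implicit. Unset Printing Implicit Defensive.
Import Order.TTheory GRing.Theory Num.Theory.
Local Open Scope ring_scope.

Section Defs.
Variable R : rcfType.

Definition adjmx (m n : nat) (A : 'M[R[i]]_(m, n)) : 'M[R[i]]_(n, m) :=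
  (map_mx (@conjc R) A)^T.

Definition hermitian (n : nat) (A : 'M[R[i]]_n) : Prop := adjmx A = A.

(* v^dagger A v >= 0 (in the order of R[i]: real and nonnegative) *)
Definition psd (n : nat) (A : 'M[R[i]]_n) : Prop :=
  forall v : 'cV[R[i]]_n, 0 <= (adjmx v *m A *m v) 0 0.

Definition density_matrix (Nq : nat) (rho : 'M[R[i]]_(2 ^ Nq)) : Prop :=
  [/\ hermitian rho, psd rho & \tr rho = 1].

Definition eigenvalues_of (n : nat) (A : 'M[R[i]]_n) (lam : 'I_n -> R) : Prop :=
  char_poly A = \prod_(i < n) ('X - (real_complex R (lam i))%:P).

(* Index i : 'I_(2^Nq) stands for lambda_(i+1); the nondominant eigenvalues
   lambda_2..lambda_(2^Nq) are those with 0 < i. *)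
Definition Eexp (Nq : nat) (lam : 'I_(2 ^ Nq) -> R) (g : R -> R) : R :=
  (((2 ^ Nq)%N - 1)%:R)^-1 * \sum_(i < 2 ^ Nq | (0 < i)%N) g (lam i).

Definition mean (Nq : nat) (lam : 'I_(2 ^ Nq) -> R) : R := Eexp lam id.

Definition bandwidth (Nq : nat) (lam : 'I_(2 ^ Nq) -> R) : R :=
  (mean lam)^-1 * Num.sqrt (Eexp lam (fun x => `|x - mean lam| ^+ 2)).

Definition eps_tilde (Nq N : nat) (lam : 'I_(2 ^ Nq) -> R) (beta : 'I_(N - 1) -> R) : R :=
  Eexp lam (fun x => `|x * \prod_(n < N - 1) (x - beta n)|).

Definition err_ratio (Nq N : nat) (lam : 'I_(2 ^ Nq) -> R) (beta : 'I_(N - 1) -> R) : R :=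
  eps_tilde lam beta / eps_tilde lam (fun _ : 'I_(N - 1) => 0).

End Defs.

(** The error of the filter with all zeros at the mean [mu] of the
    nondominant eigenvalues is controlled by their spread: each deviation
    [|lambda_i - mu|] is at most the root of the sum of squared deviations
    [D = b mu sqrt (2^Nq - 1)], so [eps(mu) <= mu D^(N-1) <= D^(N-1) / m] with
    [m = 2^Nq - 1], using [mu <= 1/m] (unit trace).  Conversely some
    nondominant eigenvalue is at least [mu], hence
    [eps(0) >= mu^N / m], and the two bounds combine to
    [R <= D^(N-1) / mu^N = mu^-1 (b sqrt m)^(N-1)]. *)
From HB Require Import structures.
From mathcomp Require Import all_boot all_order all_algebra.
From mathcomp Require Import complex ring.
Set Implicit Arguments. Unset Strict Implicit. Unset Printing Implicit Defensive.
Import Order.TTheory GRing.Theory Num.Theory.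
Local Open Scope ring_scope.

Lemma mxtrace_eigenvalues (R : rcfType) n (A : 'M[R[i]]_n) (lam : 'I_n -> R) :
  eigenvalues_of A lam -> \tr A = real_complex R (\sum_i lam i).
Proof.
case: n A lam => [|n] A lam; first by rewrite /mxtrace !big_ord0 rmorph0.
rewrite /eigenvalues_of rmorph_sum => eig.
apply/eqP; rewrite -eqr_opp -char_poly_trace // eig.
set ps := [seq real_complex R (lam i) | i <- enum 'I_n.+1].
have size_ps : size ps = n.+1 by rewrite size_map size_enum_ord.
have -> : \prod_(i < n.+1) ('X - (real_complex R (lam i))%:P)
          = \prod_(p <- ps) ('X - p%:P) by rewrite big_map big_enum.
by rewrite -{1}size_ps coefPn_prod_XsubC ?size_ps // big_map big_enum.
Qed.

Lemma normr_le_sqrt_sumr_sqr (R : rcfType) m (F : 'I_m -> R) j :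
  `|F j| <= Num.sqrt (\sum_k `|F k| ^+ 2).
Proof.
have sumr_sqr_ge0 (P : pred 'I_m) : 0 <= \sum_(k | P k) `|F k| ^+ 2.
  by apply: sumr_ge0 => k _; exact: sqr_ge0.
rewrite -sqrtr_sqr ler_sqrt // -real_normK ?num_real //.
by rewrite (bigD1 j) //= lerDl.
Qed.

Definition avg (R : numFieldType) m (y : 'I_m -> R) (g : R -> R) : R :=
  (m%:R)^-1 * \sum_j g (y j).

Section Average.

Variables (R : realFieldType) (m : nat) (y : 'I_m -> R).

Lemma avg_gt0_ord_gt0 g : 0 < avg y g -> (0 < m)%N.
Proof. by case: m y => [|//] y0; rewrite /avg big_ord0 mulr0 ltxx. Qed.

Lemma avg_le_point : (0 < m)%N -> exists j, avg y id <= y j.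
Proof.
move=> m_gt0; case: (boolP [exists j, avg y id <= y j]) => [/existsP //|].
move=> /existsPn all_lt; exfalso.
have : \sum_j y j < \sum_(j < m) avg y id.
  apply: ltr_sum => [|j _]; last by rewrite ltNge all_lt.
  by apply/hasP; exists (Ordinal m_gt0); rewrite ?mem_index_enum.
by rewrite sumr_const card_ord /avg -mulrnAr -(mulr_natl (\sum_j y j)) mulKf
  ?pnatr_eq0 -?lt0n ?ltxx.
Qed.

Hypothesis y_ge0 : forall j, 0 <= y j.

Lemma avg_normr_mul_dev_le (c D : R) K :
  (forall j, `|y j - c| <= D) ->
  avg y (fun x => `|x| * `|x - c| ^+ K) <= avg y id * D ^+ K.
Proof.
move=> dev_le; rewrite /avg -mulrA mulr_suml ler_wpM2l ?invr_ge0 //.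
apply: ler_sum => j _; rewrite ger0_norm // ler_wpM2l //.
by rewrite lerXn2r ?nnegrE // (le_trans _ (dev_le j)).
Qed.

Lemma avg_normrX_ge k :
  0 < avg y id -> (m%:R)^-1 * avg y id ^+ k <= avg y (fun x => `|x| ^+ k).
Proof.
move=> avg_gt0; have [j avg_le_yj] := avg_le_point (avg_gt0_ord_gt0 avg_gt0).
rewrite ler_wpM2l ?invr_ge0 // (bigD1 j) //= ger0_norm //.
apply: ler_wpDr; first by apply: sumr_ge0 => i _; exact: exprn_ge0.
by apply: lerXn2r; rewrite ?nnegrE ?y_ge0 // ltW.
Qed.

End Average.

Lemma sqrt_avg_mul (R : rcfType) m (y : 'I_m -> R) (g : R -> R) :
  (0 < m)%N -> 0 <= \sum_j g (y j) ->
  Num.sqrt (avg y g) * Num.sqrt m%:R = Num.sqrt (\sum_j g (y j)).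
Proof.
move=> m_gt0 sum_ge0; rewrite -sqrtrM; last by rewrite mulr_ge0 ?invr_ge0.
by rewrite /avg mulrAC mulVf ?mul1r // pnatr_eq0 -lt0n.
Qed.

Lemma avg_ratio_le (R : rcfType) m K (y : 'I_m -> R) :
  (forall j, 0 <= y j) -> \sum_j y j <= 1 -> 0 < avg y id ->
  avg y (fun x => `|x| * `|x - avg y id| ^+ K) / avg y (fun x => `|x| ^+ K.+1)
    <= (avg y id)^-1 * ((avg y id)^-1 * Num.sqrt (avg y (fun x => `|x - avg y id| ^+ 2))
                          * Num.sqrt m%:R) ^+ K.
Proof.
set mu := avg y id => y_ge0 sum_le1 mu_gt0.
have m_gt0 := avg_gt0_ord_gt0 mu_gt0.
set D := Num.sqrt (\sum_j `|y j - mu| ^+ 2).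
have mu_le : mu <= m%:R^-1 by rewrite /mu /avg ler_piMr ?invr_ge0.
have num_le : avg y (fun x => `|x| * `|x - mu| ^+ K) <= m%:R^-1 * D ^+ K.
  have := avg_normr_mul_dev_le y_ge0 K (normr_le_sqrt_sumr_sqr (fun j => y j - mu)).
  move=> /le_trans; apply.
  by rewrite ler_wpM2r ?exprn_ge0 ?sqrtr_ge0.
have den_gt0 : 0 < m%:R^-1 * mu ^+ K.+1 by rewrite mulr_gt0 ?invr_gt0 ?ltr0n ?exprn_gt0.
have den_ge := avg_normrX_ge y_ge0 K.+1 mu_gt0.
rewrite ler_pdivrMr ?(lt_le_trans den_gt0) // (le_trans num_le) //.
rewrite -mulrA sqrt_avg_mul //; last by apply: sumr_ge0 => j _; exact: sqr_ge0.
have -> : m%:R^-1 * D ^+ K = mu^-1 * (mu^-1 * D) ^+ K * (m%:R^-1 * mu ^+ K.+1).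
  by rewrite exprMn exprS exprVn; field; rewrite pnatr_eq0 -lt0n m_gt0 expf_neq0 gt_eqF.
by rewrite ler_wpM2l // mulr_ge0 ?exprn_ge0 ?mulr_ge0 ?invr_ge0 ?sqrtr_ge0 ?ltW.
Qed.

Definition avg_tail (R : numFieldType) n (lam : 'I_n -> R) (g : R -> R) : R :=
  ((n - 1)%:R)^-1 * \sum_(i < n | (0 < i)%N) g (lam i).

Lemma avg_tail_lift (R : numFieldType) n (lam : 'I_n.+1 -> R) g :
  avg_tail lam g = avg (fun j => lam (lift ord0 j)) g.
Proof. by rewrite /avg_tail /avg subn1 big_mkcond big_ord_recl /= add0r. Qed.

Lemma avg_tail_ratio_le (R : rcfType) n K (lam : 'I_n -> R) :
  (forall i, 0 <= lam i) -> \sum_i lam i = 1 -> 0 < avg_tail lam id ->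
  avg_tail lam (fun x => `|x| * `|x - avg_tail lam id| ^+ K)
      / avg_tail lam (fun x => `|x| ^+ K.+1)
    <= (avg_tail lam id)^-1
       * ((avg_tail lam id)^-1 * Num.sqrt (avg_tail lam (fun x => `|x - avg_tail lam id| ^+ 2))
          * Num.sqrt (n - 1)%:R) ^+ K.
Proof.
case: n lam => [|n] lam lam_ge0 sum_eq1; first by rewrite /avg_tail big_ord0 mulr0 ltxx.
rewrite !avg_tail_lift subn1 /=; apply: avg_ratio_le => //.
by rewrite -sum_eq1 big_ord_recl lerDr.
Qed.

Lemma eq_Eexp (R : rcfType) Nq (lam : 'I_(2 ^ Nq) -> R) (f g : R -> R) :
  f =1 g -> Eexp lam f = Eexp lam g.
Proof. by move=> fg; rewrite /Eexp (eq_bigr _ (fun i _ => fg (lam i))). Qed.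

Lemma eps_tilde_cst (R : rcfType) Nq N (lam : 'I_(2 ^ Nq) -> R) (c : R) :
  eps_tilde lam (fun _ : 'I_(N - 1) => c) = Eexp lam (fun x => `|x| * `|x - c| ^+ (N - 1)).
Proof. by apply: eq_Eexp => x; rewrite prodr_const card_ord normrM normrX. Qed.

Lemma eps_tilde0 (R : rcfType) Nq N (lam : 'I_(2 ^ Nq) -> R) :
  eps_tilde lam (fun _ : 'I_(N - 1) => 0) = Eexp lam (fun x => `|x| ^+ (N - 1).+1).
Proof. by rewrite eps_tilde_cst; apply: eq_Eexp => x; rewrite subr0 exprS. Qed.

Theorem proposition2 (R : rcfType) (Nq N : nat) (rho : 'M[R[i]]_(2 ^ Nq))
    (lam : 'I_(2 ^ Nq) -> R) :
  (1 <= Nq)%N -> (2 <= N)%N ->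
  density_matrix rho ->
  eigenvalues_of rho lam ->
  (forall i j : 'I_(2 ^ Nq), (i <= j)%N -> lam j <= lam i) ->
  (forall i, 0 <= lam i) ->
  0 < mean lam ->
  err_ratio lam (fun _ : 'I_(N - 1) => mean lam)
    <= (mean lam)^-1 * (bandwidth lam * Num.sqrt ((2 ^ Nq)%N - 1)%:R) ^+ (N - 1).
Proof.
move=> _ _ [_ _ tr_eq1] eig _ lam_ge0 mean_gt0.
have sum_eq1 : \sum_i lam i = 1.
  by apply: (@complexI R); rewrite -(mxtrace_eigenvalues eig) tr_eq1 rmorph1.
rewrite /err_ratio eps_tilde_cst eps_tilde0.
exact: avg_tail_ratio_le.
Qed.
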